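(* Let $G$ and $H$ be graphs with no isolated vertices. Then $$\gamma_{oir2}(G\Box H)\leq \alpha(G)\beta(H)+\beta(G)|V(H)|-\min\{\beta(G),\beta(H)\}.$$
   Context: All graphs are finite and simple. $\alpha(F)$ denotes the independence number of a graph $F$ and $\beta(F)$ its vertex cover number, so $\alpha(F)+\beta(F)=|V(F)|$. For a graph $G$, a function $f:V(G)\to\mathcal{P}(\{1,2\})$ is an outer-independent 2-rainbow dominating function (OI2RD function) if every vertex $v$ with $f(v)=\emptyset$ satisfies $\bigcup_{u\in N(v)}f(u)=\{1,2\}$ and the set $\{v: f(v)=\emptyset\}$ is independent. The weight of $f$ is $\sum_{v}|f(v)|$ and $\gamma_{oir2}(G)$ is the minimum weight of an OI2RD function of $G$. The Cartesian product $G\Box H$ has vertex set $V(G)\times V(H)$, with $(x,y)(x',y')$ an edge iff either $x=x'$ and $yy'\in E(H)$, or $y=y'$ and $xx'\in E(G)$. *)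

From mathcomp Require Import all_boot.
Set Implicit Arguments. Unset Strict Implicit. Unset Printing Implicit Defensive.

Definition simple_graph (T : finType) (e : rel T) : Prop :=
  symmetric e /\ irreflexive e.

Definition no_isolated (T : finType) (e : rel T) : Prop :=
  forall v : T, exists u : T, e v u.

Definition independent (T : finType) (e : rel T) (S : {set T}) : bool :=
  [forall x in S, forall y in S, ~~ e x y].

Definition vertex_cover (T : finType) (e : rel T) (S : {set T}) : bool :=
  [forall x, forall y, e x y ==> (x \in S) || (y \in S)].

Definition alpha (T : finType) (e : rel T) : nat :=
  \max_(S : {set T} | independent e S) #|S|.

(* vertex cover number: minimum size of a vertex cover (setT is one) *)
Definition beta (T : finType) (e : rel T) : nat :=
  \big[minn/#|T|]_(S : {set T} | vertex_cover e S) #|S|.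

(* labels {1,2} are represented by 'I_2 *)
Definition oi2rd (T : finType) (e : rel T) (f : {ffun T -> {set 'I_2}}) : bool :=
  [forall v, (f v == set0) ==> (\bigcup_(u | e v u) f u == setT)]
  && independent e [set v | f v == set0].

Definition weight (T : finType) (f : {ffun T -> {set 'I_2}}) : nat :=
  \sum_(v : T) #|f v|.

(* minimum weight; the constant function setT (weight 2|T|) is always an OI2RD function *)
Definition gamma_oir2 (T : finType) (e : rel T) : nat :=
  \big[minn/(2 * #|T|)]_(f : {ffun T -> {set 'I_2}} | oi2rd e f) weight f.

Definition cart_rel (T1 T2 : finType) (e1 : rel T1) (e2 : rel T2) : rel (T1 * T2) :=
  fun x y => ((x.1 == y.1) && e2 x.2 y.2) || ((x.2 == y.2) && e1 x.1 y.1).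

(* Take minimum vertex covers S1 of G and S2 of H, give label {1} to the rows
   over S1 and label {2} to the remaining vertices of the columns over S2.  As
   V(G) \ S1 and V(H) \ S2 are independent, this is an OI2RD function of weight
   β(G)|V(H)| + |V(G) \ S1| β(H), and |V(G) \ S1| <= α(G).  Since every vertex
   of a minimum cover has a neighbour outside it, one may moreover empty
   min(β(G), β(H)) vertices of S1 × S2, no two in a common row or column: each
   still sees label {1} in its row and label {2} in its column. *)

From mathcomp Require Import all_boot zify.

Set Implicit Arguments. Unset Strict Implicit. Unset Printing Implicit Defensive.

Lemma geq_bigmin_cond (I : finType) (P : pred I) (F : I -> nat) m i :
  P i -> \big[minn/m]_(j | P j) F j <= F i.
Proof.
move=> Pi; rewrite unlock.
elim: (index_enum I) (mem_index_enum i) => //= j r IHr.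
rewrite inE => /predU1P [<-|ir]; first by rewrite Pi geq_minl.
by case: (P j); rewrite ?geq_min IHr ?orbT.
Qed.

Lemma bigmin_idx_or_attained (I : finType) (P : pred I) (F : I -> nat) m :
  \big[minn/m]_(i | P i) F i = m \/
  exists2 i, P i & F i = \big[minn/m]_(i | P i) F i.
Proof.
pose Q x := x = m \/ exists2 i, P i & F i = x.
apply: (big_ind Q); [by left | | by move=> i Pi; right; exists i].
by move=> x y Qx Qy; rewrite /minn; case: ifP.
Qed.

Section Covers.

Variables (T : finType) (e : rel T).

Lemma vertex_coverP (S : {set T}) :
  reflect (forall x y, e x y -> (x \in S) || (y \in S)) (vertex_cover e S).
Proof.
apply: (iffP forallP) => [cover x y|cover x].
  by move: (cover x) => /forallP/(_ y)/implyP.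
by apply/forallP => y; apply/implyP/cover.
Qed.

Lemma vertex_coverT : vertex_cover e setT.
Proof. by apply/vertex_coverP => x y _; rewrite inE. Qed.

Lemma beta_le_cover (S : {set T}) : vertex_cover e S -> beta e <= #|S|.
Proof. exact: geq_bigmin_cond. Qed.

Lemma min_vertex_cover_exists : exists2 S : {set T}, vertex_cover e S & #|S| = beta e.
Proof.
case: (bigmin_idx_or_attained (vertex_cover e) (fun S => #|S|) #|T|) => [betaT|//].
by exists setT; rewrite ?vertex_coverT // cardsT /beta betaT.
Qed.

Lemma independent_setC_cover (S : {set T}) :
  vertex_cover e S -> independent e (~: S).
Proof.
move/vertex_coverP=> cover; apply/forallP => x; apply/implyP; rewrite inE => xS.
apply/forallP => y; apply/implyP; rewrite inE => yS.
by apply/negP => /cover; rewrite (negbTE xS) (negbTE yS).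
Qed.

Lemma card_setC_cover_le_alpha (S : {set T}) :
  vertex_cover e S -> #|~: S| <= alpha e.
Proof.
by move/independent_setC_cover/(leq_bigmax_cond (F := fun S' : {set T} => #|S'|)).
Qed.

Lemma vertex_cover_nbr (S : {set T}) x y :
  vertex_cover e S -> e x y -> x \notin S -> y \in S.
Proof. by move/vertex_coverP/(_ x y) => cover /cover; case: (x \in S). Qed.

Hypotheses (e_sym : symmetric e) (e_irr : irreflexive e).

(* Otherwise [S :\ s] would be a smaller vertex cover. *)
Lemma min_cover_outer_neighbor (S : {set T}) :
  vertex_cover e S -> #|S| = beta e ->
  forall s, s \in S -> exists2 x, e s x & x \notin S.
Proof.
move=> cover cardS s sS.
case: (pickP [pred x | e s x && (x \notin S)]) => [x /andP[]|no_outer]; first by exists x.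
have inner x : e s x -> x \in S.
  by move=> esx; move/negbT: (no_outer x); rewrite /= esx negbK.
have neq_s x : e s x -> x != s by move=> esx; apply: contraTneq esx => ->; rewrite e_irr.
have coverD1 : vertex_cover e (S :\ s).
  apply/vertex_coverP => x y exy; rewrite !inE.
  have [xs|_] /= := eqVneq x s; first by move: exy; rewrite xs => esy; rewrite neq_s ?inner.
  have [ys|_] /= := eqVneq y s; first by move: exy; rewrite ys e_sym => /inner ->.
  by move/vertex_coverP: cover; apply.
by have := beta_le_cover coverD1; rewrite -cardS (cardsD1 s S) sS; lia.
Qed.

End Covers.

Section Nonattacking.

Variables T1 T2 : finType.

Definition nonattacking (D : {set T1 * T2}) : Prop :=
  forall v w, v \in D -> w \in D -> v.1 = w.1 \/ v.2 = w.2 -> v = w.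

Lemma nonattacking_exists (A : {set T1}) (B : {set T2}) :
  exists D : {set T1 * T2},
    [/\ D \subset setX A B, #|D| = minn #|A| #|B| & nonattacking D].
Proof.
set k := minn #|A| #|B|.
have [kA kB] : k <= #|A| /\ k <= #|B| by rewrite geq_minl geq_minr.
pose g (i : 'I_k) := (enum_val (widen_ord kA i), enum_val (widen_ord kB i)).
have g_inj1 i j : (g i).1 = (g j).1 -> i = j.
  by move/enum_val_inj/(congr1 val) => /= ij; apply: val_inj.
have g_inj2 i j : (g i).2 = (g j).2 -> i = j.
  by move/enum_val_inj/(congr1 val) => /= ij; apply: val_inj.
exists (g @: setT); split.
- by apply/subsetP => _ /imsetP [i _ ->]; rewrite in_setX !enum_valP.
- by rewrite card_imset ?cardsT ?card_ord // => i j /(congr1 fst)/g_inj1.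
- by move=> _ _ /imsetP [i _ ->] /imsetP [j _ ->] [/g_inj1|/g_inj2] ->.
Qed.

End Nonattacking.

Lemma sum_mem_card (T : finType) (A : {set T}) : \sum_(v : T) (v \in A : nat) = #|A|.
Proof. by rewrite -sum1_card [RHS]big_mkcond; apply: eq_bigr => v _; case: (v \in A). Qed.

Lemma gamma_oir2_le (T : finType) (e : rel T) (f : {ffun T -> {set 'I_2}}) :
  oi2rd e f -> gamma_oir2 e <= weight f.
Proof. exact: geq_bigmin_cond. Qed.

Lemma rainbow_neighbors (T : finType) (e : rel T) (f : {ffun T -> {set 'I_2}}) v u0 u1 :
  e v u0 -> e v u1 -> f u0 = [set ord0] -> f u1 = [set ord_max] ->
  \bigcup_(u | e v u) f u = setT.
Proof.
move=> vu0 vu1 fu0 fu1; apply/setP => i; rewrite inE; apply/bigcupP.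
by case: i => [[|[|//]] i_lt2]; [exists u0 | exists u1];
  rewrite ?fu0 ?fu1 ?inE //; apply/eqP/val_inj.
Qed.

Lemma cart_rel_row (T1 T2 : finType) (e1 : rel T1) (e2 : rel T2) x y y' :
  e2 y y' -> cart_rel e1 e2 (x, y) (x, y').
Proof. by rewrite /cart_rel /= eqxx => ->. Qed.

Lemma cart_rel_col (T1 T2 : finType) (e1 : rel T1) (e2 : rel T2) x x' y :
  e1 x x' -> cart_rel e1 e2 (x, y) (x', y).
Proof. by rewrite /cart_rel /= eqxx => ->; rewrite orbT. Qed.

Section CoverLabelling.

Variables (T1 T2 : finType) (e1 : rel T1) (e2 : rel T2).
Variables (S1 : {set T1}) (S2 : {set T2}) (D : {set T1 * T2}).

Local Notation G := (cart_rel e1 e2).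

Definition cover_labelling : {ffun T1 * T2 -> {set 'I_2}} :=
  [ffun v => if v \in D then set0 else if v.1 \in S1 then [set ord0]
             else if v.2 \in S2 then [set ord_max] else set0].

Local Notation f := cover_labelling.

Lemma cover_labelling_eq0 v :
  (f v == set0) = (v \in D) || (v.1 \notin S1) && (v.2 \notin S2).
Proof.
have set1_neq0 (a : 'I_2) : [set a] != set0 by apply/set0Pn; exists a; rewrite inE.
rewrite ffunE; case: (v \in D); rewrite ?eqxx //.
by case: (v.1 \in S1); case: (v.2 \in S2); rewrite ?(negbTE (set1_neq0 _)) ?eqxx.
Qed.

Lemma cover_labelling_row x y : (x, y) \notin D -> x \in S1 -> f (x, y) = [set ord0].
Proof. by rewrite ffunE /= => /negbTE -> ->. Qed.

Lemma cover_labelling_col x y :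
  (x, y) \notin D -> x \notin S1 -> y \in S2 -> f (x, y) = [set ord_max].
Proof. by rewrite ffunE /= => /negbTE -> /negbTE -> ->. Qed.

Hypothesis D_sub : D \subset setX S1 S2.

Lemma in_D_covers v : v \in D -> (v.1 \in S1) && (v.2 \in S2).
Proof. by case: v => x y /(subsetP D_sub); rewrite in_setX. Qed.

Lemma weight_cover_labelling :
  weight f + #|D| = #|S1| * #|T2| + #|~: S1| * #|S2|.
Proof.
rewrite -cardsT -!cardsX /weight -!sum_mem_card -!big_split /=.
apply: eq_bigr => v _; rewrite ffunE !inE.
case: (boolP (v \in D)) => [/in_D_covers /andP [-> _]|_]; first by rewrite cards0.
by case: (v.1 \in S1); case: (v.2 \in S2); rewrite ?cards1 ?cards0.
Qed.

Hypotheses (e1_irr : irreflexive e1) (e2_irr : irreflexive e2).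
Hypotheses (noiso1 : no_isolated e1) (noiso2 : no_isolated e2).
Hypotheses (cover1 : vertex_cover e1 S1) (cover2 : vertex_cover e2 S2).
Hypothesis outer1 : forall s, s \in S1 -> exists2 x, e1 s x & x \notin S1.
Hypothesis D_na : nonattacking D.

Lemma cover_labelling_rainbow v : f v = set0 -> \bigcup_(u | G v u) f u = setT.
Proof.
have notin_D x y : (x \notin S1) || (y \notin S2) -> (x, y) \notin D.
  by apply: contraTN => /in_D_covers /= /andP [-> ->].
case: v => x y /eqP; rewrite cover_labelling_eq0 /= => /orP [vD | /andP [x_S1 y_S2]].
  have /andP [/= xS1 yS2] := in_D_covers vD.
  have [y' yy'] := noiso2 y; have [x' xx' x'_S1] := outer1 xS1.
  apply: (rainbow_neighbors (cart_rel_row _ x yy') (cart_rel_col _ y xx')).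
    apply: cover_labelling_row xS1; apply/negP => /D_na /(_ vD (or_introl erefl)) [y'y].
    by rewrite y'y e2_irr in yy'.
  by apply: cover_labelling_col; rewrite ?notin_D ?x'_S1.
have [x' xx'] := noiso1 x; have [y' yy'] := noiso2 y.
apply: (rainbow_neighbors (cart_rel_col _ y xx') (cart_rel_row _ x yy')).
  by apply: cover_labelling_row; rewrite ?notin_D ?y_S2 ?orbT ?(vertex_cover_nbr cover1 xx').
by apply: cover_labelling_col; rewrite ?notin_D ?x_S1 ?(vertex_cover_nbr cover2 yy').
Qed.

Lemma cover_labelling_zeros_independent : independent G [set v | f v == set0].
Proof.
apply/forallP => v; apply/implyP; rewrite inE cover_labelling_eq0 => zv.
apply/forallP => w; apply/implyP; rewrite inE cover_labelling_eq0 => zw.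
apply/negP; case/orP: zv => [vD|/andP [v1 v2]]; case/orP: zw => [wD|/andP [w1 w2]];
  case/orP => /andP [/eqP vw edge].
- by rewrite (D_na vD wD (or_introl vw)) e2_irr in edge.
- by rewrite (D_na vD wD (or_intror vw)) e1_irr in edge.
- by have /andP [] := in_D_covers vD; rewrite vw (negbTE w1).
- by have /andP [] := in_D_covers vD; rewrite vw (negbTE w2).
- by have /andP [] := in_D_covers wD; rewrite -vw (negbTE v1).
- by have /andP [] := in_D_covers wD; rewrite -vw (negbTE v2).
- by move: (vertex_cover_nbr cover2 edge v2); rewrite (negbTE w2).
- by move: (vertex_cover_nbr cover1 edge v1); rewrite (negbTE w1).
Qed.

Lemma cover_labelling_oi2rd : oi2rd G f.
Proof.
apply/andP; split; last exact: cover_labelling_zeros_independent.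
by apply/forallP => v; apply/implyP => /eqP /cover_labelling_rainbow ->.
Qed.

End CoverLabelling.

Theorem theorem3 (T1 T2 : finType) (e1 : rel T1) (e2 : rel T2)
  (HG : simple_graph e1) (HH : simple_graph e2)
  (nG : no_isolated e1) (nH : no_isolated e2) :
  gamma_oir2 (cart_rel e1 e2) <=
    alpha e1 * beta e2 + beta e1 * #|T2| - minn (beta e1) (beta e2).
Proof.
case: HG HH => [e1_sym e1_irr] [_ e2_irr].
have [S1 cover1 cardS1] := min_vertex_cover_exists e1.
have [S2 cover2 cardS2] := min_vertex_cover_exists e2.
have [D [D_sub cardD D_na]] := nonattacking_exists S1 S2.
have outer1 := min_cover_outer_neighbor e1_sym e1_irr cover1 cardS1.
have f_oi2rd :=
  cover_labelling_oi2rd D_sub e1_irr e2_irr nG nH cover1 cover2 outer1 D_na.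
have gamma_le := gamma_oir2_le f_oi2rd.
have weightE := weight_cover_labelling D_sub.
have alpha_bound : #|~: S1| * beta e2 <= alpha e1 * beta e2.
  by rewrite leq_mul2r card_setC_cover_le_alpha ?orbT.
rewrite cardD cardS1 cardS2 in weightE; lia.
Qed.
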